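(* For any fixed parameters $p_0>0$, $r>1$ and any fixed (bid-independent) processing order of the bidders, the multiplicative price update algorithm, applied to the declared types, is a truthful mechanism without money and with verification for CAs with unknown $k$-minded bidders.
   Context: Multi-unit combinatorial auction: a set $\mathsf U$ of $m$ goods, each with supply $b\ge1$; $n$ bidders. True type of bidder $i$: $t_i=(v_i,\mathcal S_i)$ with $\mathcal S_i$ a private collection of $k$ nonempty subsets of $\mathsf U$ and $v_i:\mathcal S_i\to\mathbb R_{\ge0}$ private, extended by $v_i(T)=\max\{v_i(S'):S'\in\mathcal S_i,S'\subseteq T\}$ ($0$ if none). Declarations $c=(w,\mathcal W)$ have the same form; $D_i$ is the set of all declarations. Multiplicative price update algorithm on declarations $(w_i,\mathcal W_i)$: $p_e^1=p_0$ for every good; for each bidder $i$ in the fixed order: let $S_i$ maximize $w_i(S)$ among $S\in\mathcal W_i$ with $w_i(S)\ge\sum_{e\in S}p_e^i$ ($S_i=\emptyset$ if none); multiply the price of each $e\in S_i$ by $r$; allocate $S_i$ to $i$. Verification: bidder $i$ with true type $t_i$ facing $\mathbf b_{-i}$ may declare $b_i=(z,\mathcal T)$ only if $z(A_i(b_i,\mathbf b_{-i}))\le v_i(A_i(b_i,\mathbf b_{-i}))$. A mechanism $A$ is truthful without money and with verification if for all $i$, $\mathbf b_{-i}$, true types $t_i$ and declarations $b_i$ permitted by verification, $v_i(A_i(t_i,\mathbf b_{-i}))\ge v_i(A_i(b_i,\mathbf b_{-i}))$. *)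

From HB Require Import structures.
From mathcomp Require Import all_boot all_order all_algebra all_fingroup.
Set Implicit Arguments. Unset Strict Implicit. Unset Printing Implicit Defensive.
Import Order.TTheory GRing.Theory Num.Theory.
Local Open Scope ring_scope.

Section MPU.
Variables (G : finType) (R : realFieldType).

(* A type / declaration: (valuation on the declared sets, collection of sets). *)
Definition decl := (({set G} -> R) * {set {set G}})%type.

Definition kminded (k : nat) (d : decl) : Prop :=
  #|d.2| = k /\ set0 \notin d.2 /\ (forall S, S \in d.2 -> 0 <= d.1 S).

Definition ext_val (d : decl) (T : {set G}) : R :=
  \big[Num.max/0]_(S' in d.2 | S' \subset T) d.1 S'.

Definition price_sum (p : G -> R) (S : {set G}) : R := \sum_(e in S) p e.

Definition candidates (p : G -> R) (d : decl) : {set {set G}} :=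
  [set S in d.2 | price_sum p S <= d.1 S].

(* A maximizer of the declared value among candidates (ties broken by the
   fixed enumeration of {set G}); the empty set if there is no candidate. *)
Definition choose_set (p : G -> R) (d : decl) : {set G} :=
  odflt set0 [pick S in candidates p d |
               [forall T in candidates p d, d.1 T <= d.1 S]].

Definition update_prices (r : R) (p : G -> R) (S : {set G}) : G -> R :=
  fun e => if e \in S then p e * r else p e.

Fixpoint mpu_run (n : nat) (r : R) (bs : 'I_n -> decl) (p : G -> R)
    (s : seq 'I_n) (A : 'I_n -> {set G}) : 'I_n -> {set G} :=
  match s with
  | [::] => A
  | i :: s' =>
      let S := choose_set p (bs i) in
      mpu_run r bs (update_prices r p S) s' (fun j => if j == i then S else A j)
  end.

(* The mechanism: initial prices p0, multiplier r, processing order sigma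
   (bidder sigma j is processed at step j). *)
Definition mpu (n : nat) (p0 r : R) (sigma : {perm 'I_n}) (bs : 'I_n -> decl)
    : 'I_n -> {set G} :=
  mpu_run r bs (fun _ => p0) [seq sigma j | j <- enum 'I_n] (fun _ => set0).

Definition upd_profile (n : nat) (bs : 'I_n -> decl) (i : 'I_n) (d : decl)
    : 'I_n -> decl := fun j => if j == i then d else bs j.

End MPU.

From HB Require Import structures.
From mathcomp Require Import all_boot all_order all_algebra all_fingroup.
Set Implicit Arguments. Unset Strict Implicit. Unset Printing Implicit Defensive.
Import Order.TTheory GRing.Theory Num.Theory.
Local Open Scope ring_scope.

(* When bidder i is processed, the current prices depend only on the
   declarations of the bidders processed before i, never on i's own
   declaration; and they are nonnegative, since p0 > 0 and r > 1.  So bidder i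
   faces a posted-price menu, and truthfulness reduces to a one-step fact:
   if i declares b and receives B = choose_set p b, verification gives
   v_b(B) <= v_t(B); if v_t(B) > 0 it is attained by some true set S' within
   B, whose price is at most p(B) <= v_b(B) <= v_t(B) = t(S'), so S' is an
   affordable set for the truthful declaration, and the truthful choice is
   worth at least t(S'). *)

Section PostedPrice.
Variables (G : finType) (R : realFieldType).
Implicit Types (p : G -> R) (d t b : decl G R) (S T : {set G}).

Lemma price_sum_subset p S T :
  (forall e, 0 <= p e) -> S \subset T -> price_sum p S <= price_sum p T.
Proof.
move=> p_ge0 sST; rewrite /price_sum [X in _ <= X](big_setID S) /= (setIidPr sST).
by rewrite lerDl sumr_ge0.
Qed.

Lemma ext_val_ge0 d T : 0 <= ext_val d T.
Proof. by apply: (big_rec (fun x => 0 <= x)) => // x y _ y_ge0; rewrite le_max y_ge0 orbT. Qed.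

Lemma ext_val_ge d S T : S \in d.2 -> S \subset T -> d.1 S <= ext_val d T.
Proof. by move=> Sd sST; apply: le_bigmax_cond; rewrite Sd sST. Qed.

Lemma ext_val_attained d T :
  ext_val d T = 0 \/ exists2 S, (S \in d.2) && (S \subset T) & ext_val d T = d.1 S.
Proof.
apply: (big_ind (fun x => x = 0 \/ exists2 S, (S \in d.2) && (S \subset T) & x = d.1 S)).
- by left.
- by move=> x y Hx Hy; rewrite /Num.max; case: ifP.
- by move=> S HS; right; exists S.
Qed.

Lemma choose_set_affordable p d :
  price_sum p (choose_set p d) <= ext_val d (choose_set p d).
Proof.
rewrite /choose_set; case: pickP => [S /andP[+ _] | _] /=.
  by rewrite inE => /andP[Sd /le_trans]; apply; apply: ext_val_ge.
by rewrite /price_sum big_set0 ext_val_ge0.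
Qed.

Lemma choose_set_max p d S :
  S \in candidates p d ->
  exists2 S0, S0 \in candidates p d & choose_set p d = S0 /\ d.1 S <= d.1 S0.
Proof.
move=> S_cand; rewrite /choose_set; case: pickP => [S0 /andP[S0_cand /forall_inP S0_max]|no_max].
  by exists S0 => //; split => //; apply: S0_max.
exfalso; have [S0 S0_in S0_max] := arg_maxP (fun T => d.1 T) S_cand.
have S0_cand : S0 \in candidates p d := S0_in.
move: (no_max S0); rewrite S0_cand /= => /negbT/negP; apply.
by apply/forall_inP => T; apply: S0_max.
Qed.

Lemma posted_price_truthful p t b : (forall e, 0 <= p e) ->
  ext_val b (choose_set p b) <= ext_val t (choose_set p b) ->
  ext_val t (choose_set p b) <= ext_val t (choose_set p t).
Proof.
move=> p_ge0 verified.
have [-> | [S' /andP[S't sS'B] val_S']] := ext_val_attained t (choose_set p b).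
  exact: ext_val_ge0.
have S'_cand : S' \in candidates p t.
  rewrite inE S't /= -val_S'; apply: le_trans (price_sum_subset p_ge0 sS'B) _.
  exact: le_trans (choose_set_affordable p b) verified.
have [S0 S0_cand [-> le_S'S0]] := choose_set_max S'_cand.
rewrite val_S'; apply: le_trans le_S'S0 _; apply: ext_val_ge => //.
by move: S0_cand; rewrite inE => /andP[].
Qed.

End PostedPrice.

Section Run.
Variables (G : finType) (R : realFieldType) (n : nat) (r : R).
Implicit Types (bs : 'I_n -> decl G R) (p : G -> R) (s : seq 'I_n).

Fixpoint prices_after bs p s : G -> R :=
  if s is j :: s' then prices_after bs (update_prices r p (choose_set p (bs j))) s'
  else p.

Lemma run_notin bs p s (A : 'I_n -> {set G}) (i : 'I_n) :
  i \notin s -> mpu_run r bs p s A i = A i.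
Proof.
elim: s p A => [|j s IH] p A //=; rewrite inE negb_or => /andP[neq_ij i_s].
by rewrite IH // (negbTE neq_ij).
Qed.

Lemma run_at bs p s1 s2 (A : 'I_n -> {set G}) (i : 'I_n) :
  i \notin s1 -> i \notin s2 ->
  mpu_run r bs p (s1 ++ i :: s2) A i = choose_set (prices_after bs p s1) (bs i).
Proof.
elim: s1 p A => [|j s IH] p A /=; first by move=> _ i_s2; rewrite run_notin // eqxx.
by rewrite inE negb_or => /andP[_ i_s] i_s2; apply: IH.
Qed.

Lemma prices_after_ext bs bs' p s :
  (forall j, j \in s -> bs j = bs' j) -> prices_after bs p s = prices_after bs' p s.
Proof.
elim: s p => [|j s IH] p //= eq_bs.
by rewrite eq_bs ?mem_head //; apply: IH => x x_s; apply: eq_bs; rewrite inE x_s orbT.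
Qed.

Lemma prices_after_ge0 bs p s : 0 <= r -> (forall e, 0 <= p e) ->
  forall e, 0 <= prices_after bs p s e.
Proof.
move=> r_ge0; elim: s p => [|j s IH] p //= p_ge0; apply: IH => e.
by rewrite /update_prices; case: ifP => _ //; apply: mulr_ge0.
Qed.

Lemma order_split (sigma : {perm 'I_n}) (i : 'I_n) :
  exists s1 s2, [/\ [seq sigma j | j <- enum 'I_n] = s1 ++ i :: s2,
                    i \notin s1 & i \notin s2].
Proof.
set s := [seq sigma j | j <- enum 'I_n].
have s_uniq : uniq s by rewrite map_inj_uniq ?enum_uniq //; apply: perm_inj.
have i_s : i \in s by apply/mapP; exists (sigma^-1 i)%g; rewrite ?mem_enum ?permKV.
case/splitPr: i_s s_uniq => s1 s2.
rewrite cat_uniq /= negb_or => /and3P[_ /andP[i_s1 _] /andP[i_s2 _]].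
by exists s1, s2.
Qed.

End Run.

Theorem theorem4 (G : finType) (R : realFieldType) (n k : nat) (p0 r : R)
    (sigma : {perm 'I_n}) :
  0 < p0 -> 1 < r ->
  forall (bs : 'I_n -> decl G R), (forall j, kminded k (bs j)) ->
  forall (i : 'I_n) (t b : decl G R),
    kminded k t -> kminded k b ->
    ext_val b (mpu p0 r sigma (upd_profile bs i b) i)
      <= ext_val t (mpu p0 r sigma (upd_profile bs i b) i) ->
    ext_val t (mpu p0 r sigma (upd_profile bs i b) i)
      <= ext_val t (mpu p0 r sigma (upd_profile bs i t) i).
Proof.
move=> p0_gt0 r_gt1 bs _ i t b _ _.
have [s1 [s2 [order i_s1 i_s2]]] := order_split sigma i.
have same_prices : prices_after r (upd_profile bs i b) (fun=> p0) s1
                 = prices_after r (upd_profile bs i t) (fun=> p0) s1.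
  apply: prices_after_ext => j j_s1; rewrite /upd_profile.
  by case: eqP => // eq_ji; move: i_s1; rewrite -eq_ji j_s1.
rewrite /mpu order !run_at // same_prices /upd_profile !eqxx.
apply: posted_price_truthful; apply: prices_after_ge0 => [|_]; last exact: ltW.
by apply: le_trans (ltW r_gt1).
Qed.
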